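(* Let $q$ be a prime power, $n$ a positive integer, $a\in\mathbb{F}_q$, let $l$ be a divisor of $q^n-1$, and let $p_1,\ldots,p_r$ be all the primes dividing $q^n-1$ but not $l$. Then $$N_a(q^n-1,q^n-1)\geq \sum_{i=1}^r N_a(p_il,l)+\sum_{i=1}^r N_a(l,p_il)-(2r-1)N_a(l,l).$$
   Context: For a divisor $e$ of $q^n-1$, an element $\xi\in\mathbb{F}_{q^n}^*$ is $e$-free if whenever $\xi=\gamma^d$ with $d\mid e$ and $\gamma\in\mathbb{F}_{q^n}$, we must have $d=1$. For divisors $l_1,l_2$ of $q^n-1$ and $a\in\mathbb{F}_q$, $N_a(l_1,l_2)$ is the number of $\alpha\in\mathbb{F}_{q^n}^*$ such that $\alpha$ is $l_1$-free, $\alpha+\alpha^{-1}$ is nonzero and $l_2$-free, and $\mathrm{Tr}_{\mathbb{F}_{q^n}|\mathbb{F}_q}(\alpha)=a$, where $\mathrm{Tr}_{\mathbb{F}_{q^n}|\mathbb{F}_q}(\alpha)=\alpha+\alpha^q+\cdots+\alpha^{q^{n-1}}$. *)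

From HB Require Import structures.
From mathcomp Require Import all_boot all_order all_algebra all_field.
Set Implicit Arguments. Unset Strict Implicit. Unset Printing Implicit Defensive.
Import GRing.Theory.
Local Open Scope ring_scope.

(* The field F_{q^n} is a finite field L with #|L| = q^n; F_q is identified
   with its unique subfield of order q, i.e. {x in L | x^q = x}. *)

Definition efree (L : finFieldType) (e : nat) (xi : L) : bool :=
  (xi != 0) &&
  [forall d : 'I_e.+1, forall g : L,
     ((d %| e)%N && (xi == g ^+ d)) ==> (val d == 1%N)].

Definition trq (L : finFieldType) (q n : nat) (alpha : L) : L :=
  \sum_(i < n) alpha ^+ (q ^ i).

Definition Na (L : finFieldType) (q n : nat) (a : L) (l1 l2 : nat) : nat :=
  #|[set alpha : L | [&& alpha != 0, efree l1 alpha,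
                         alpha + alpha^-1 != 0, efree l2 (alpha + alpha^-1)
                       & trq q n alpha == a]]|.

Definition bad_primes (q n l : nat) : seq nat :=
  [seq p <- primes (q ^ n - 1) | ~~ (p %| l)%N].

(** Being [e]-free depends only on the primes dividing [e]: [x] is [e]-free
    iff it is nonzero and not a [p]-th power for any prime [p | e].  So, on
    the set counted by [N_a(l,l)], the sets counted by [N_a(pl,l)],
    [N_a(l,pl)] and [N_a(q^n-1,q^n-1)] are cut out by "[x] is not a [p]-th
    power", "[x + x^-1] is not a [p]-th power", and the conjunction of all
    these conditions over the primes [p] not dividing [l].  The theorem is
    the sum over that set of the pointwise inequality
    [sum_p (f_p + g_p) - (2r - 1) <= prod_p f_p g_p] for 0/1-valued [f_p],
    [g_p]. *)
From HB Require Import structures.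
From mathcomp Require Import all_boot all_order all_algebra all_field zify.
Import GRing.Theory Num.Theory.
Local Open Scope ring_scope.

Definition is_power {L : finFieldType} (d : nat) (x : L) : bool :=
  [exists g : L, x == g ^+ d].

Section Efree.

Context {L : finFieldType}.
Implicit Types (x : L) (e l m p : nat).

Lemma efree_primes e x : (0 < e)%N ->
  efree e x = (x != 0) && all (fun p => ~~ is_power p x) (primes e).
Proof.
move=> e_gt0; rewrite /efree; case: (x != 0) => //=.
apply/forallP/allP => [xfree p | nopow d].
- rewrite mem_primes => /and3P[p_pr _ p_dvd_e]; apply/existsP => -[g /eqP xE].
  have p_lt : (p < e.+1)%N by rewrite ltnS dvdn_leq.
  have /forallP/(_ g) := xfree (Ordinal p_lt).
  by rewrite /= p_dvd_e xE eqxx => /eqP p1; rewrite p1 in p_pr.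
- apply/forallP => g; apply/implyP => /andP[d_dvd_e /eqP xE].
  have d_gt0 : (0 < d)%N by apply: dvdn_gt0 d_dvd_e.
  rewrite eqn_leq d_gt0 andbT leqNgt; apply/negP => d_gt1.
  have pd_prime : prime (pdiv d) by rewrite pdiv_prime.
  have : pdiv d \in primes e.
    by rewrite mem_primes pd_prime e_gt0 (dvdn_trans (pdiv_dvd d)).
  move/nopow/existsP; apply; exists (g ^+ (d %/ pdiv d)).
  by rewrite -exprM divnK ?pdiv_dvd // xE.
Qed.

Lemma efree_mul_prime p l x : prime p -> (0 < l)%N ->
  efree (p * l) x = efree l x && ~~ is_power p x.
Proof.
move=> p_pr l_gt0; have p_gt0 := prime_gt0 p_pr.
rewrite !efree_primes ?muln_gt0 ?p_gt0 //.
have primes_pl : primes (p * l) =i p :: primes l.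
  by move=> r; rewrite primesM // primes_prime // inE.
by rewrite (eq_all_r primes_pl) /= -andbA [_ && ~~ _]andbC.
Qed.

Lemma efree_dvd {m l} x : (0 < m)%N -> (l %| m)%N ->
  efree m x = efree l x && all (fun p => ~~ is_power p x)
                              [seq p <- primes m | ~~ (p %| l)%N].
Proof.
move=> m_gt0 l_dvd_m; have l_gt0 := dvdn_gt0 m_gt0 l_dvd_m.
rewrite !efree_primes // -andbA -all_cat.
congr (_ && _); apply: eq_all_r => r.
rewrite mem_cat mem_filter !mem_primes m_gt0 l_gt0 /=.
case: (boolP (r %| l)%N) => [r_dvd_l | _]; rewrite ?andbF ?orbF //.
by rewrite (dvdn_trans r_dvd_l l_dvd_m) !andbT.
Qed.

End Efree.

Lemma sieve_indicator (I : Type) (s : seq I) (f g : pred I) :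
  \sum_(i <- s) (f i : nat)%:Z + \sum_(i <- s) (g i : nat)%:Z
    - ((2 * size s)%:Z - 1) <= (all f s && all g s : nat)%:Z.
Proof.
elim: s => [|i s IHs]; first by rewrite !big_nil.
rewrite !big_cons /=; move: IHs.
by case: (f i) (g i) (all f s) (all g s) => /=; lia.
Qed.

Lemma card_indicator (T : finType) (A : pred T) :
  (#|A|)%:Z = \sum_(x : T) ((x \in A) : nat)%:Z.
Proof.
rewrite -sum1_card big_mkcond /= rmorph_sum.
by apply: eq_bigr => x _; case: (x \in A).
Qed.

Lemma card_sieve (T : finType) (I : Type) (s : seq I) (A : {set T})
    (f g : I -> pred T) :
  \sum_(i <- s) (#|[set x in A | f i x]|)%:Z
    + \sum_(i <- s) (#|[set x in A | g i x]|)%:Z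
    - ((2 * size s)%:Z - 1) * (#|A|)%:Z
  <= (#|[set x in A | all (f^~ x) s && all (g^~ x) s]|)%:Z.
Proof.
under eq_bigr do rewrite card_indicator.
under [X in _ + X - _]eq_bigr do rewrite card_indicator.
rewrite !card_indicator exchange_big [X in _ + X - _]exchange_big /=.
rewrite mulr_sumr -sumrN -!big_split /=.
apply: ler_sum => x _.
under eq_bigr do rewrite inE; under [X in _ + X - _]eq_bigr do rewrite inE.
rewrite inE; case: (x \in A) => /=; last by rewrite !big1 ?mulr0 ?subr0.
by rewrite mulr1; apply: sieve_indicator.
Qed.

Section NaRefine.

Context {L : finFieldType} (q n : nat) (a : L) (l : nat).

Definition Na_set (l1 l2 : nat) : {set L} :=
  [set alpha : L | [&& alpha != 0, efree l1 alpha,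
                       alpha + alpha^-1 != 0, efree l2 (alpha + alpha^-1)
                     & trq q n alpha == a]].

Lemma Na_refine l1 l2 (P1 P2 : pred L) :
    (forall x, efree l1 x = efree l x && P1 x) ->
    (forall x, efree l2 x = efree l x && P2 x) ->
  Na q n a l1 l2 = #|[set x in Na_set l l | P1 x && P2 (x + x^-1)]|.
Proof.
move=> efree1 efree2; apply: eq_card => x; rewrite !inE efree1 efree2.
move: (x != 0) (efree l x) (P1 x) (x + x^-1 != 0) (efree l (x + x^-1)).
by move: (P2 _) (trq q n x == a); do 7!case.
Qed.

Hypothesis l_gt0 : (0 < l)%N.

Lemma Na_mul_prime_l p : prime p ->
  Na q n a (p * l) l = #|[set x in Na_set l l | ~~ is_power p x]|.
Proof.
move=> p_pr; rewrite (@Na_refine _ _ (fun x => ~~ is_power p x) predT).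
- by apply: eq_card => x; rewrite !inE andbT.
- by move=> x; rewrite efree_mul_prime.
- by move=> x; rewrite andbT.
Qed.

Lemma Na_mul_prime_r p : prime p ->
  Na q n a l (p * l) = #|[set x in Na_set l l | ~~ is_power p (x + x^-1)]|.
Proof.
move=> p_pr; apply: (@Na_refine _ _ predT (fun y => ~~ is_power p y)).
- by move=> x; rewrite andbT.
- by move=> x; rewrite efree_mul_prime.
Qed.

Lemma Na_dvd {m} : (0 < m)%N -> (l %| m)%N ->
  let s := [seq p <- primes m | ~~ (p %| l)%N] in
  Na q n a m m = #|[set x in Na_set l l | all (fun p => ~~ is_power p x) s
                                   && all (fun p => ~~ is_power p (x + x^-1)) s]|.
Proof.
move=> m_gt0 l_dvd_m s.
by apply: (@Na_refine _ _ (fun y => all (fun p => ~~ is_power p y) s)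
                         (fun y => all (fun p => ~~ is_power p y) s))
  => x; apply: efree_dvd.
Qed.

End NaRefine.

Lemma prime_power_pred_gt0 {p k n : nat} : prime p -> (0 < k)%N -> (0 < n)%N ->
  (0 < (p ^ k) ^ n - 1)%N.
Proof.
move=> p_pr k_gt0 n_gt0; rewrite subn_gt0 -expnM.
apply: leq_ltn_trans (ltn_expl _ (prime_gt1 p_pr)).
by rewrite muln_gt0 k_gt0.
Qed.

Theorem lemma3p3 (L : finFieldType) (q n : nat) (a : L) (l : nat) :
  (exists p k : nat, [/\ prime p, (0 < k)%N & q = (p ^ k)%N]) ->
  (0 < n)%N ->
  #|L| = (q ^ n)%N ->
  a ^+ q = a ->
  (l %| q ^ n - 1)%N ->
  (\sum_(p <- bad_primes q n l) (Na q n a (p * l) l)%:Z)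
    + (\sum_(p <- bad_primes q n l) (Na q n a l (p * l))%:Z)
    - ((2 * size (bad_primes q n l))%:Z - 1) * (Na q n a l l)%:Z
    <= (Na q n a (q ^ n - 1) (q ^ n - 1))%:Z.
Proof.
move=> [p0 [k [p0_pr k_gt0 q_def]]] n_gt0 _ _ l_dvd_m.
have m_gt0 : (0 < q ^ n - 1)%N by rewrite q_def prime_power_pred_gt0.
have l_gt0 := dvdn_gt0 m_gt0 l_dvd_m.
have bad_prime p : p \in bad_primes q n l -> prime p.
  by rewrite mem_filter mem_primes => /andP[_ /and3P[]].
rewrite !big_seq.
under eq_bigr => p /bad_prime p_pr do rewrite Na_mul_prime_l //.
under [X in _ + X - _]eq_bigr => p /bad_prime p_pr do rewrite Na_mul_prime_r //.
rewrite -!big_seq (Na_dvd q n a l m_gt0 l_dvd_m).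
exact: (@card_sieve _ _ _ _ (fun p x => ~~ is_power p x)
                              (fun p x => ~~ is_power p (x + x^-1))).
Qed.
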